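(* If $\mathcal R$ is a polyhedral region in $\mathbb Z^k$, then either $\mathcal R$ contains arbitrarily large $k$-dimensional boxes (i.e. for every $n$ it contains a $k$-dimensional box of size $n$), or $\mathcal R$ is a set of measure zero.
   Context: A half-space is $\{\vec z\in\mathbb Z^k:\vec v\cdot\vec z>n\}$ with $\vec v\in\mathbb Z^k$, $n\in\mathbb Z$; a polyhedral region is $\mathbb Z^k$ or an intersection of finitely many half-spaces. A hyperplane is $\{\vec z\in\mathbb Z^k:\vec v\cdot\vec z=n\}$ with $\vec v\in\mathbb Z^k\setminus\{0\}$, $n\in\mathbb Z$; a set of measure zero is a subset of $\mathbb Z^k$ covered by finitely many hyperplanes. A $k$-dimensional box of size $n$ is $\{\vec z\in\mathbb Z^k: c_i\le z_i\le c_i+n,\ i=1,\dots,k\}$ for some $c_i\in\mathbb Z$. *)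

From mathcomp Require Import all_boot all_algebra.
Set Implicit Arguments. Unset Strict Implicit. Unset Printing Implicit Defensive.
Import GRing.Theory Num.Theory.
Local Open Scope ring_scope.

Definition pt (k : nat) := 'I_k -> int.

Definition dotz (k : nat) (v z : pt k) : int := \sum_(i < k) v i * z i.

Definition halfspace (k : nat) (v : pt k) (n : int) : pt k -> Prop :=
  fun z => n < dotz v z.

Definition hyperplane (k : nat) (v : pt k) (n : int) : pt k -> Prop :=
  fun z => dotz v z = n.

(* A polyhedral region: Z^k or an intersection of finitely many half-spaces.
   Given by a finite family (v_j, n_j), j < m; m = 0 gives Z^k. *)
Definition polyhedral (k : nat) (R : pt k -> Prop) : Prop :=
  (forall z, R z) \/
  exists (m : nat) (v : 'I_m -> pt k) (b : 'I_m -> int),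
    forall z, R z <-> (forall j, halfspace (v j) (b j) z).

Definition measure_zero (k : nat) (S : pt k -> Prop) : Prop :=
  exists (m : nat) (v : 'I_m -> pt k) (b : 'I_m -> int),
    (forall j, exists i, v j i <> 0) /\
    forall z, S z -> exists j, hyperplane (v j) (b j) z.

Definition box (k : nat) (c : pt k) (n : nat) : pt k -> Prop :=
  fun z => forall i, c i <= z i <= c i + n%:Z.

Definition contains_box (k : nat) (R : pt k -> Prop) (n : nat) : Prop :=
  exists c : pt k, forall z, box c n z -> R z.

From mathcomp Require Import all_boot all_order all_algebra.
From mathcomp Require Import lra zify.
Set Implicit Arguments. Unset Strict Implicit. Unset Printing Implicit Defensive.
Import Order.TTheory GRing.Theory Num.Theory.
Local Open Scope ring_scope.

(* Gordan's alternative, proved over Q by Fourier-Motzkin elimination, says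
   that either some direction x has v_j . x > 0 for every nonzero normal v_j of
   the region, or some nonnegative combination of the normals vanishes while
   putting positive weight on a nonzero v_j0.  In the first case, clearing the
   denominators of x gives an integer direction y, and for T large enough the
   box of size n with corner T y stays inside every half-space.  In the second
   case, summing the constraints v_j . z > b_j with the combination bounds
   v_j0 . z from above on the region, and v_j0 . z > b_j0 bounds it from below,
   so the region lies on finitely many parallel hyperplanes v_j0 . z = c.
   Zero normals either empty the region or impose no constraint. *)

Section Gordan.
Variable F : realFieldType.

Lemma separating_point (I : finType) (P Q : pred I) (l u : I -> F) :
  (forall i j, P i -> Q j -> l i < u j) ->
  exists t, (forall i, P i -> l i < t) /\ (forall j, Q j -> t < u j).
Proof.
move=> lu; case: (pickP P) => [i0 Pi0|P0]; case: (pickP Q) => [j0 Qj0|Q0].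
- case: (arg_maxP l Pi0) => i Pi maxi; case: (arg_minP u Qj0) => j Qj minj.
  have lij := lu _ _ Pi Qj; exists ((l i + u j) / 2).
  by split=> [i' /maxi|j' /minj] /=; lra.
- case: (arg_maxP l Pi0) => i Pi maxi; exists (l i + 1).
  by split=> [i' /maxi /=|j]; [lra|rewrite Q0].
- case: (arg_minP u Qj0) => j Qj minj; exists (u j - 1).
  by split=> [i|j' /minj /=]; [rewrite P0|lra].
- by exists 0; split=> i; rewrite ?P0 ?Q0.
Qed.

Definition dotr k (v x : 'I_k -> F) := \sum_i v i * x i.

Definition separating_dir k (I : finType) (v : I -> 'I_k -> F) x :=
  forall j, (exists i, v j i != 0) -> 0 < dotr (v j) x.

Definition vanishing_comb k (I : finType) (v : I -> 'I_k -> F) (lam : I -> F) :=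
  [/\ forall j, 0 <= lam j, forall i, \sum_j lam j * v j i = 0 &
      exists2 j, 0 < lam j & exists i, v j i != 0].

Lemma sum_if_eq (I : finType) (j0 : I) (c : F) (f : I -> F) :
  \sum_j (if j == j0 then c else 0) * f j = c * f j0.
Proof.
by rewrite (bigD1 j0) //= eqxx big1 ?addr0 // => j /negbTE ->; rewrite mul0r.
Qed.

Section FourierMotzkin.
Variables (k : nat) (I : finType) (v : I -> 'I_k.+1 -> F).

Definition fm_lead j := v j ord0.

Definition fm_tail j (i : 'I_k) := v j (lift ord0 i).

Definition opposite_leads p n := (0 < fm_lead p) && (fm_lead n < 0).

(* Fourier-Motzkin elimination of the first coordinate: the rows with zero
   first entry, and for each pair of rows with first entries of opposite signs
   the nonnegative combination of the two that cancels it.  The combinations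
   are indexed by [I + I * I]; indices of no such kind get the zero row. *)
Definition fm_coef (idx : I + I * I) j : F :=
  match idx with
  | inl j' => if (fm_lead j' == 0) && (j == j') then 1 else 0
  | inr (p, n) => if opposite_leads p n then
      (if j == p then - fm_lead n else 0) + (if j == n then fm_lead p else 0)
    else 0
  end.

Definition fm_comb idx i := \sum_j fm_coef idx j * v j i.

Definition fm_row idx (i : 'I_k) := fm_comb idx (lift ord0 i).

Lemma fm_combE idx i : fm_comb idx i = match idx with
  | inl j => if fm_lead j == 0 then v j i else 0
  | inr (p, n) => if opposite_leads p n then
      - fm_lead n * v p i + fm_lead p * v n i else 0
  end.
Proof.
rewrite /fm_comb; case: idx => [j|[p n]] /=.
  by case: eqP => _; rewrite ?sum_if_eq ?mul1r // big1 // => j' _; rewrite mul0r.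
case: ifP => _; last by rewrite big1 // => j _; rewrite mul0r.
by under eq_bigr do rewrite mulrDl; rewrite big_split /= !sum_if_eq.
Qed.

Lemma fm_comb_lead idx : fm_comb idx ord0 = 0.
Proof.
rewrite fm_combE; case: idx => [j|[p n]]; first by case: eqP.
by case: ifP => // _; rewrite /fm_lead; lra.
Qed.

Lemma fm_coef_ge0 idx j : 0 <= fm_coef idx j.
Proof.
case: idx => [j'|[p n]] /=; first by case: ifP.
case: ifP => // /andP[lp ln].
by apply: addr_ge0; case: ifP => // _; lra.
Qed.

Lemma fm_coef_pair_gt0 p n : opposite_leads p n -> 0 < fm_coef (inr (p, n)) p.
Proof.
move=> pn; have /andP[lp ln] := pn; rewrite /= pn eqxx.
by case: eqP => [np|_]; [move: ln; rewrite -np; lra | lra].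
Qed.

Lemma fm_comb_witness idx : (exists i, fm_comb idx i != 0) ->
  exists2 j, 0 < fm_coef idx j & exists i, v j i != 0.
Proof.
case=> i; rewrite fm_combE; case: idx => [j|[p n]].
  case: (fm_lead j =P 0) => [lj vj|_]; last by rewrite eqxx.
  by exists j; [rewrite /fm_coef lj !eqxx | exists i].
case: ifP => [pn _|_]; last by rewrite eqxx.
exists p; first exact: fm_coef_pair_gt0.
by exists ord0; have /andP[lp _] := pn; rewrite gt_eqF.
Qed.

Lemma dotr_fm_row_pair p n x : opposite_leads p n ->
  dotr (fm_row (inr (p, n))) x =
  - fm_lead n * dotr (fm_tail p) x + fm_lead p * dotr (fm_tail n) x.
Proof.
move=> pn; rewrite /dotr !mulr_sumr -big_split; apply: eq_bigr => i _.
by rewrite /fm_row fm_combE pn mulrDl !mulrA.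
Qed.

Lemma dotr_lift (x : 'I_k -> F) t j :
  dotr (v j) (fun i => if unlift ord0 i is Some i' then x i' else t) =
  fm_lead j * t + dotr (fm_tail j) x.
Proof.
rewrite /dotr big_ord_recl unlift_none; congr (_ + _).
by apply: eq_bigr => i _; rewrite liftK.
Qed.

Lemma fm_pair_vanishing_comb p n : opposite_leads p n ->
  (forall i, fm_row (inr (p, n)) i = 0) -> vanishing_comb v (fm_coef (inr (p, n))).
Proof.
move=> pn rows0; split; first exact: fm_coef_ge0.
  by move=> i; case: (unliftP ord0 i) => [i' ->|->]; [exact: rows0 | exact: fm_comb_lead].
exists p; first exact: fm_coef_pair_gt0.
by exists ord0; have /andP[lp _] := pn; rewrite gt_eqF.
Qed.

Lemma fm_lift_vanishing_comb mu : vanishing_comb fm_row mu ->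
  vanishing_comb v (fun j => \sum_idx mu idx * fm_coef idx j).
Proof.
case=> mu_ge0 mu_sum [idx mu_gt0 [i row_nz]].
have lam_ge0 j : 0 <= \sum_idx mu idx * fm_coef idx j.
  by apply: sumr_ge0 => idx' _; rewrite mulr_ge0 ?fm_coef_ge0.
split=> // [i'|].
  under eq_bigr do rewrite mulr_suml.
  rewrite exchange_big /=.
  under eq_bigr do under eq_bigr do rewrite -mulrA.
  under eq_bigr do rewrite -mulr_sumr.
  case: (unliftP ord0 i') => [i'' ->|->]; first exact: mu_sum.
  by rewrite big1 // => idx' _; rewrite -/(fm_comb _ _) fm_comb_lead mulr0.
have [|j coef_gt0 vj] := @fm_comb_witness idx; first by exists (lift ord0 i).
exists j => //; rewrite (bigD1 idx) //=.
apply: (lt_le_trans (mulr_gt0 mu_gt0 coef_gt0)); rewrite lerDl.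
by apply: sumr_ge0 => idx' _; rewrite mulr_ge0 ?fm_coef_ge0.
Qed.

Lemma fm_lift_separating_dir x : separating_dir fm_row x ->
  (forall p n, opposite_leads p n -> exists i, fm_row (inr (p, n)) i != 0) ->
  exists y, separating_dir v y.
Proof.
move=> xdir pairs_nz.
pose lo p := - dotr (fm_tail p) x / fm_lead p.
pose hi n := dotr (fm_tail n) x / - fm_lead n.
have lo_hi p n : 0 < fm_lead p -> fm_lead n < 0 -> lo p < hi n.
  move=> lp ln; have pn : opposite_leads p n by rewrite /opposite_leads lp ln.
  have := xdir _ (pairs_nz _ _ pn); rewrite dotr_fm_row_pair //.
  rewrite /lo /hi ltr_pdivrMr // mulrAC ltr_pdivlMr ?oppr_gt0 //; nra.
have [t [lo_t t_hi]] := separating_point lo_hi.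
exists (fun i => if unlift ord0 i is Some i' then x i' else t) => j vj.
rewrite dotr_lift; case: (ltgtP (fm_lead j) 0) => lj.
- by move: (t_hi _ lj); rewrite /hi ltr_pdivlMr ?oppr_gt0 //; nra.
- by move: (lo_t _ lj); rewrite /lo ltr_pdivrMr //; nra.
- have tail_row : fm_tail j =1 fm_row (inl j).
    by move=> i; rewrite /fm_row fm_combE lj eqxx.
  rewrite lj mul0r add0r /dotr; under eq_bigr do rewrite tail_row.
  apply: xdir; case: vj => i; case: (unliftP ord0 i) => [i' ->|->].
    by exists i'; rewrite -tail_row.
  by rewrite -/(fm_lead j) lj eqxx.
Qed.

End FourierMotzkin.

Theorem gordan_alternative k (I : finType) (v : I -> 'I_k -> F) :
  (exists x, separating_dir v x) \/ (exists lam, vanishing_comb v lam).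
Proof.
elim: k I v => [|k IH] I v.
  by left; exists (fun _ => 0) => j [[]].
case: (IH _ (fm_row v)) => [[x xdir]|[mu /fm_lift_vanishing_comb cert]]; last first.
  by right; exists (fun j => \sum_idx mu idx * fm_coef v idx j).
case: (boolP [exists pn : I * I, opposite_leads v pn.1 pn.2 &&
                                 [forall i, fm_row v (inr pn) i == 0]]).
  move=> /existsP[[p n] /andP[pn /forallP rows0]].
  by right; eexists; apply: fm_pair_vanishing_comb pn _ => i; apply/eqP.
rewrite negb_exists => /forallP pairs_nz; left; apply: (fm_lift_separating_dir xdir).
by move=> p n pn; move: (pairs_nz (p, n)); rewrite /= pn negb_forall => /existsP.
Qed.

End Gordan.

Section IntegerPoints.
Variable k : nat.
Implicit Types (u c y z : pt k) (S : pt k -> Prop).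

Lemma dotz_scale u (T : int) y : dotz u (fun i => T * y i) = T * dotz u y.
Proof. by rewrite /dotz mulr_sumr; apply: eq_bigr => i _; rewrite mulrCA. Qed.

Lemma dotz_box_ge u c n z :
  box c n z -> dotz u c - n%:Z * \sum_i `|u i| <= dotz u z.
Proof.
move=> zc; suff : - (n%:Z * \sum_i `|u i|) <= \sum_i u i * (z i - c i).
  by rewrite /dotz (eq_bigr _ (fun i _ => mulrBr _ _ _)) sumrB; lra.
rewrite mulr_sumr -sumrN; apply: ler_sum => i _.
have /andP[ci zi] := zc i.
have : `|u i * (z i - c i)| <= n%:Z * `|u i|.
  by rewrite normrM [`|z i - c i|]ger0_norm ?subr_ge0 // mulrC ler_wpM2r // lerBlDl.
have := ler_norm (- (u i * (z i - c i))); rewrite normrN; lra.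
Qed.

Lemma halfspaces_contain_boxes m (v : 'I_m -> pt k) (b : 'I_m -> int) y :
  (forall j, (exists i, v j i != 0) -> 0 < dotz (v j) y) ->
  (forall j, (forall i, v j i = 0) -> b j < 0) ->
  forall n, contains_box (fun z => forall j, halfspace (v j) (b j) z) n.
Proof.
move=> ydir zero_rows n.
pose slack j := `|b j| + n%:Z * \sum_i `|v j i|.
have slack_ge0 j : 0 <= slack j by rewrite addr_ge0 ?mulr_ge0 ?sumr_ge0.
pose T := 1 + \sum_j slack j.
exists (fun i => T * y i) => z zbox j; rewrite /halfspace.
case: (boolP [exists i, v j i != 0]) => [/existsP vj|].
  have slack_T : slack j + 1 <= T.
    by rewrite addrC lerD2l (bigD1 j) //= lerDl sumr_ge0.
  have T_le : T <= T * dotz (v j) y.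
    by apply: ler_peMr; [rewrite addr_ge0 ?sumr_ge0 | have := ydir j vj; lia].
  have := dotz_box_ge (v j) zbox; rewrite dotz_scale.
  have := ler_norm (b j); rewrite /slack in slack_T; lra.
rewrite negb_exists => /forallP vj0.
have {}vj0 i : v j i = 0 by apply/eqP/negPn.
by rewrite /dotz big1 ?zero_rows // => i _; rewrite vj0 mul0r.
Qed.

Lemma empty_measure_zero S : (forall z, ~ S z) -> measure_zero S.
Proof. by move=> S0; exists 0%N, (fun _ _ => 0), (fun _ => 0); split=> [[]|z /S0]. Qed.

Lemma bounded_form_measure_zero S u (lo hi : int) :
  (exists i, u i <> 0) -> (forall z, S z -> lo <= dotz u z <= hi) ->
  measure_zero S.
Proof.
move=> u_nz bounded; exists (absz (hi - lo)).+1, (fun _ => u).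
exists (fun j => lo + (j : nat)%:Z); split=> // z /bounded /andP[lo_z z_hi].
have lt : (absz (dotz u z - lo) < (absz (hi - lo)).+1)%N by lia.
by exists (Ordinal lt); rewrite /hyperplane /=; lia.
Qed.

Lemma vanishing_comb_upper_bound (F : archiRealFieldType) m (v : 'I_m -> pt k)
    (b : 'I_m -> int) (lam : 'I_m -> F) j0 :
  (forall j, 0 <= lam j) -> (forall i, \sum_j lam j * (v j i)%:~R = 0) ->
  0 < lam j0 ->
  exists N : int, forall z, (forall j, b j < dotz (v j) z) -> dotz (v j0) z <= N.
Proof.
move=> lam_ge0 lam_sum lam_gt0.
pose Q := - \sum_(j | j != j0) lam j * (b j)%:~R.
exists (Num.ceil (Q / lam j0)) => z zR.
have comb0 : \sum_j lam j * (dotz (v j) z)%:~R = 0.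
  under eq_bigr => j _ do rewrite /dotz rmorph_sum mulr_sumr.
  rewrite exchange_big /= big1 // => i _.
  under eq_bigr do rewrite intrM mulrA.
  by rewrite -mulr_suml lam_sum mul0r.
have : lam j0 * (dotz (v j0) z)%:~R <= Q.
  move: comb0; rewrite (bigD1 j0) //= => /eqP; rewrite addr_eq0 => /eqP ->.
  rewrite lerN2; apply: ler_sum => j _; rewrite ler_wpM2l // ler_int ltW //.
rewrite -ler_pdivlMl // mulrC => bound.
by rewrite -(ler_int F) (le_trans bound) ?ceil_ge.
Qed.

End IntegerPoints.

Lemma rat_vector_scale k (x : 'I_k -> rat) :
  exists2 d : rat, 0 < d & exists y : 'I_k -> int, forall i, (y i)%:~R = d * x i.
Proof.
exists (\prod_i denq (x i))%:~R; first by rewrite ltr0z prodr_gt0.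
exists (fun i => numq (x i) * \prod_(l | l != i) denq (x l)) => i.
by rewrite intrM numqE [in RHS](bigD1 i) //= intrM -mulrA mulrC.
Qed.

Lemma int_separating_dir m k (v : 'I_m -> pt k) (x : 'I_k -> rat) :
  separating_dir (fun j i => (v j i)%:~R) x ->
  exists y : pt k, forall j, (exists i, v j i != 0) -> 0 < dotz (v j) y.
Proof.
move=> xdir; have [d d_gt0 [y yx]] := rat_vector_scale x.
exists y => j [i vji]; rewrite -(ltr0z rat).
have -> : (dotz (v j) y)%:~R = d * dotr (fun i => (v j i)%:~R) x.
  rewrite /dotz /dotr rmorph_sum mulr_sumr; apply: eq_bigr => i' _.
  by rewrite rmorphM /= yx mulrCA.
by rewrite mulr_gt0 // xdir //; exists i; rewrite intr_eq0.
Qed.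

Theorem lemmaB21 (k : nat) (R : pt k -> Prop) :
  polyhedral R ->
  (forall n : nat, contains_box R n) \/ measure_zero R.
Proof.
case=> [R_all|[m [v [b R_eq]]]].
  by left=> n; exists (fun _ => 0) => z _; apply: R_all.
case: (boolP [exists j, [forall i, v j i == 0] && (0 <= b j)]).
  move=> /existsP[j /andP[/forallP vj0 bj]]; right.
  apply: empty_measure_zero => z /R_eq /(_ j); rewrite /halfspace /dotz big1.
    by rewrite ltNge bj.
  by move=> i _; rewrite (eqP (vj0 i)) mul0r.
rewrite negb_exists => /forallP not_empty.
have zero_rows j : (forall i, v j i = 0) -> b j < 0.
  move=> vj0; move: (not_empty j); rewrite negb_and -ltNge.
  by have -> : [forall i, v j i == 0] by apply/forallP => i; rewrite vj0.
case: (gordan_alternative (fun j i => (v j i)%:~R : rat)).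
  case=> x /int_separating_dir[y ydir]; left=> n.
  have [c box_c] := halfspaces_contain_boxes ydir zero_rows n.
  by exists c => z /box_c /R_eq.
case=> lam [lam_ge0 lam_sum [j0 lam_gt0 [i0 vi0]]]; right.
have [N upper] := vanishing_comb_upper_bound b lam_ge0 lam_sum lam_gt0.
apply: (@bounded_form_measure_zero _ _ (v j0) (b j0 + 1) N).
  by exists i0; apply/eqP; rewrite -(intr_eq0 rat).
by move=> z /R_eq zR; rewrite lezD1 zR upper.
Qed.
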